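(* Let $H$ be a balanced subgroup of $PL_o(I)$ whose only orbital is $A=(a,b)$, and let $\phi:H\to\mathbf{R}\times\mathbf{R}$ be $h\mapsto(\ln h'_+(a),\ln h'_-(b))$, where $h'_+(a)$ is the right derivative of $h$ at $a$ and $h'_-(b)$ the left derivative at $b$. Then $\phi$ is a homomorphism and its image $\phi(H)$ is either trivial or isomorphic to $\mathbf{Z}$.
   Context: $PL_o(I)$ is the group of orientation-preserving piecewise-linear homeomorphisms of $I=[0,1]$ with finitely many breaks in slope, acting on the right. The support of $h$ is the open set of points moved by $h$; an orbital of an element is a connected component of its support; an orbital of a subgroup $G$ is a connected component of the union of the supports of its elements. If $A$ is an orbital of a subgroup $G$ and $h\in G$, then $h$ realizes an end $e$ of $A$ if some orbital of $h$ is contained in $A$ and has $e$ as an endpoint. A group $H\le PL_o(I)$ is balanced if for every subgroup $G\le H$ and every orbital $A$ of $G$, every element of $G$ which realizes one end of $A$ also realizes the other end of $A$. *)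

From Stdlib Require Import Reals ClassicalEpsilon ZArith.
From Coquelicot Require Import Coquelicot.
Open Scope R_scope.

(* Elements of PL_o(I) are represented as functions R -> R that are the
   identity outside [0,1] (so that extensional equality is the right one). *)
Definition PLo (f : R -> R) : Prop :=
  (forall x, (x < 0 \/ 1 < x) -> f x = x) /\
  f 0 = 0 /\ f 1 = 1 /\
  (forall x y, 0 <= x -> x < y -> y <= 1 -> f x < f y) /\
  exists (n : nat) (xs : nat -> R),
    xs O = 0 /\ xs n = 1 /\
    forall i, (i < n)%nat ->
      xs i < xs (S i) /\
      exists m c, forall x, xs i <= x <= xs (S i) -> f x = m * x + c.

(* Right action: the product g*h means "first g, then h". *)
Definition gmul (g h : R -> R) : R -> R := fun x => h (g x).

Definition is_subgroup (G : (R -> R) -> Prop) : Prop :=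
  G (fun x => x) /\
  (forall g h, G g -> G h -> G (gmul g h)) /\
  (forall g, G g -> exists g', G g' /\ forall x, g' (g x) = x /\ g (g' x) = x).

Definition PL_subgroup (G : (R -> R) -> Prop) : Prop :=
  is_subgroup G /\ forall g, G g -> PLo g.

(* (c,d) is an orbital of h: a connected component of the (open) support
   {x | h x <> x} of h. *)
Definition orbital (h : R -> R) (c d : R) : Prop :=
  c < d /\ (forall x, c < x < d -> h x <> x) /\ h c = c /\ h d = d.

(* (c,d) is an orbital of the group G: a connected component of the union
   of the supports of elements of G. *)
Definition group_orbital (G : (R -> R) -> Prop) (c d : R) : Prop :=
  c < d /\ (forall x, c < x < d -> exists g, G g /\ g x <> x) /\
  (forall g, G g -> g c = c /\ g d = d).

Definition realizes_left (h : R -> R) (c d : R) : Prop :=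
  exists q, orbital h c q /\ q <= d.
Definition realizes_right (h : R -> R) (c d : R) : Prop :=
  exists p, c <= p /\ orbital h p d.

Definition balanced (H : (R -> R) -> Prop) : Prop :=
  forall G : (R -> R) -> Prop,
    is_subgroup G -> (forall g, G g -> H g) ->
    forall c d, group_orbital G c d ->
      forall g, G g ->
        (realizes_left g c d -> realizes_right g c d) /\
        (realizes_right g c d -> realizes_left g c d).

Definition is_rderiv (h : R -> R) (a l : R) : Prop :=
  filterlim (fun x => (h x - h a) / (x - a)) (at_right a) (locally l).
Definition is_lderiv (h : R -> R) (b l : R) : Prop :=
  filterlim (fun x => (h x - h b) / (x - b)) (at_left b) (locally l).

(* h'_+(a) and h'_-(b) (chosen by classical description; they exist for PL maps). *)
Definition rderiv (h : R -> R) (a : R) : R :=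
  epsilon (inhabits 0) (fun l => is_rderiv h a l).
Definition lderiv (h : R -> R) (b : R) : R :=
  epsilon (inhabits 0) (fun l => is_lderiv h b l).

Definition phi (a b : R) (h : R -> R) : R * R :=
  (ln (rderiv h a), ln (lderiv h b)).

Definition padd (u v : R * R) : R * R := (fst u + fst v, snd u + snd v).

From Stdlib Require Import Reals ZArith Lra Lia ClassicalEpsilon Classical FunctionalExtensionality.
From Coquelicot Require Import Coquelicot.
Open Scope R_scope.

(* By the chain rule at the common fixed points a and b, phi is a homomorphism, and balance
   applied to H itself shows that h'(a) = 1 iff h'(b) = 1.  So the image of phi is isomorphic to
   the group L of the values ln h'(a), and it suffices to show that L is discrete.  If it is not,
   conjugation by powers of an element expanding at a gives elements that are linear, of slope
   arbitrarily close to 1, on a fixed neighbourhood of a.  Played against a nontrivial element with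
   slope 1 at a (compactly supported, hence conjugate to one supported near a), this contradicts
   balance for a suitable subgroup; if there is no such element, H is abelian, and commutation
   transports the linear germ at a to a germ at b, which no affine conjugacy can do. *)

(** * Piecewise-linear maps *)

Definition cont_at (f : R -> R) (x : R) : Prop :=
  forall eps, 0 < eps -> exists del, 0 < del /\
    forall y, Rabs (y - x) < del -> Rabs (f y - f x) < eps.

Lemma locate_piece_r (xs : nat -> R) (n : nat) :
  xs O = 0 -> xs n = 1 -> (forall i, (i < n)%nat -> xs i < xs (S i)) ->
  forall y, 0 <= y < 1 -> exists j, (j < n)%nat /\ xs j <= y < xs (S j).
Proof.
  intros X0 Xn Hinc y Hy.
  assert (Hm : forall m, (m <= n)%nat -> y < xs m ->
     exists j, (j < m)%nat /\ xs j <= y < xs (S j)).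
  { induction m as [|m IH]; intros Hm Hlt; [lra|].
    destruct (Rlt_or_le y (xs m)) as [Hl|Hl].
    - destruct (IH ltac:(lia) Hl) as [j [Hj Hjy]]. exists j; split; [lia|lra].
    - exists m; split; [lia|lra]. }
  apply (Hm n); [lia|lra].
Qed.

Lemma locate_piece_l (xs : nat -> R) (n : nat) :
  xs O = 0 -> xs n = 1 -> (forall i, (i < n)%nat -> xs i < xs (S i)) ->
  forall y, 0 < y <= 1 -> exists j, (j < n)%nat /\ xs j < y <= xs (S j).
Proof.
  intros X0 Xn Hinc y Hy.
  assert (Hm : forall m, (m <= n)%nat -> y <= xs m ->
     exists j, (j < m)%nat /\ xs j < y <= xs (S j)).
  { induction m as [|m IH]; intros Hm Hle; [lra|].
    destruct (Rle_or_lt y (xs m)) as [Hl|Hl].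
    - destruct (IH ltac:(lia) Hl) as [j [Hj Hjy]]. exists j; split; [lia|lra].
    - exists m; split; [lia|lra]. }
  apply (Hm n); [lia|lra].
Qed.

Lemma PLo_affine_germs (f : R -> R) : PLo f -> forall p, exists del, 0 < del /\
  exists m1 c1 m2 c2,
    (forall y, p - del <= y <= p -> f y = m1 * y + c1) /\
    (forall y, p <= y <= p + del -> f y = m2 * y + c2).
Proof.
  intros [Hout [F0 [F1 [_ [n [xs [X0 [Xn Hp]]]]]]]] p.
  assert (Hinc : forall i, (i < n)%nat -> xs i < xs (S i)) by (intros i Hi; apply Hp, Hi).
  assert (HR : exists d2, 0 < d2 /\ exists m2 c2,
            forall y, p <= y <= p + d2 -> f y = m2 * y + c2).
  { destruct (Rlt_or_le p 0) as [Hp0|Hp0].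
    { exists (- p / 2); split; [lra|]. exists 1, 0; intros y Hy.
      rewrite Hout by lra; ring. }
    destruct (Rlt_or_le p 1) as [Hp1|Hp1].
    - destruct (locate_piece_r xs n X0 Xn Hinc p (conj Hp0 Hp1)) as [j [Hj Hjp]].
      exists (xs (S j) - p); split; [lra|].
      destruct (Hp j Hj) as [_ [m [c Hmc]]]. exists m, c; intros y Hy; apply Hmc; lra.
    - exists 1; split; [lra|]. exists 1, 0; intros y Hy.
      destruct (Req_dec y 1) as [->|Hne]; [rewrite F1; ring|].
      rewrite Hout by lra; ring. }
  assert (HL : exists d1, 0 < d1 /\ exists m1 c1,
            forall y, p - d1 <= y <= p -> f y = m1 * y + c1).
  { destruct (Rle_or_lt p 0) as [Hp0|Hp0].
    { exists 1; split; [lra|]. exists 1, 0; intros y Hy.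
      destruct (Req_dec y 0) as [->|Hne]; [rewrite F0; ring|].
      rewrite Hout by lra; ring. }
    destruct (Rle_or_lt p 1) as [Hp1|Hp1].
    - destruct (locate_piece_l xs n X0 Xn Hinc p (conj Hp0 Hp1)) as [j [Hj Hjp]].
      exists (p - xs j); split; [lra|].
      destruct (Hp j Hj) as [_ [m [c Hmc]]]. exists m, c; intros y Hy; apply Hmc; lra.
    - exists ((p - 1) / 2); split; [lra|]. exists 1, 0; intros y Hy.
      rewrite Hout by lra; ring. }
  destruct HR as [d2 [Hd2 [m2 [c2 HR]]]], HL as [d1 [Hd1 [m1 [c1 HL]]]].
  pose proof (Rmin_l d1 d2); pose proof (Rmin_r d1 d2).
  exists (Rmin d1 d2); split; [apply Rmin_glb_lt; lra|].
  exists m1, c1, m2, c2; split; intros y Hy; [apply HL | apply HR]; lra.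
Qed.

Lemma PLo_cont (f : R -> R) : PLo f -> forall p, cont_at f p.
Proof.
  intros Hf p eps Heps.
  destruct (PLo_affine_germs f Hf p) as [del [Hdel [m1 [c1 [m2 [c2 [HL HR]]]]]]].
  assert (Ep1 : f p = m1 * p + c1) by (apply HL; lra).
  assert (Ep2 : f p = m2 * p + c2) by (apply HR; lra).
  set (K := Rabs m1 + Rabs m2 + 1).
  pose proof (Rabs_pos m1); pose proof (Rabs_pos m2).
  exists (Rmin del (eps / K)); split.
  { apply Rmin_glb_lt; [lra|]. apply Rdiv_lt_0_compat; unfold K; lra. }
  intros y Hy.
  pose proof (Rmin_l del (eps / K)); pose proof (Rmin_r del (eps / K)).
  assert (HKy : K * Rabs (y - p) < eps).
  { replace eps with (K * (eps / K)) by (field; unfold K; lra).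
    apply Rmult_lt_compat_l; unfold K in *; lra. }
  apply Rabs_def2 in Hy as Hy'.
  destruct (Rle_or_lt y p).
  - rewrite (HL y) by lra. replace (m1 * y + c1 - f p) with (m1 * (y - p)) by lra.
    rewrite Rabs_mult.
    assert (Rabs m1 * Rabs (y - p) <= K * Rabs (y - p)); [|lra].
    apply Rmult_le_compat_r; [apply Rabs_pos | unfold K; lra].
  - rewrite (HR y) by lra. replace (m2 * y + c2 - f p) with (m2 * (y - p)) by lra.
    rewrite Rabs_mult.
    assert (Rabs m2 * Rabs (y - p) <= K * Rabs (y - p)); [|lra].
    apply Rmult_le_compat_r; [apply Rabs_pos | unfold K; lra].
Qed.

Lemma PLo_lt (f : R -> R) : PLo f -> forall x y, x < y -> f x < f y.
Proof.
  intros [Hout [F0 [F1 [Hmon _]]]] x y Hxy.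
  assert (Hunit : forall z, 0 <= z <= 1 -> 0 <= f z <= 1).
  { intros z Hz. split.
    - destruct (Req_dec z 0) as [->|]; [lra|]. rewrite <- F0. left; apply Hmon; lra.
    - destruct (Req_dec z 1) as [->|]; [lra|]. rewrite <- F1. left; apply Hmon; lra. }
  destruct (Rlt_or_le x 0) as [Hx0|Hx0]; [|destruct (Rle_or_lt x 1) as [Hx1|Hx1]].
  - rewrite (Hout x) by lra.
    destruct (Rlt_or_le y 0); [rewrite Hout by lra; lra|].
    destruct (Rle_or_lt y 1); [pose proof (Hunit y); lra|].
    rewrite (Hout y) by lra; lra.
  - destruct (Rle_or_lt y 1); [apply Hmon; lra|].
    rewrite (Hout y) by lra. pose proof (Hunit x); lra.
  - rewrite (Hout x), (Hout y) by lra. lra.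
Qed.

Lemma PLo_le (f : R -> R) : PLo f -> forall x y, x <= y -> f x <= f y.
Proof. intros Hf x y [Hlt| ->]; [left; apply (PLo_lt f Hf); auto | lra]. Qed.

Lemma PLo_inj (f : R -> R) : PLo f -> forall x y, f x = f y -> x = y.
Proof.
  intros Hf x y E.
  destruct (Rtotal_order x y) as [Hl|[|Hl]]; auto; apply (PLo_lt f Hf) in Hl; lra.
Qed.

Lemma PLo_moved_nbhd (f : R -> R) x : PLo f -> f x <> x ->
  exists del, 0 < del /\ forall y, Rabs (y - x) < del -> f y <> y.
Proof.
  intros Hf Hx.
  set (e := Rabs (f x - x)).
  assert (He : 0 < e) by (apply Rabs_pos_lt; lra).
  destruct (PLo_cont f Hf x (e / 2) ltac:(lra)) as [d [Hd Hd']].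
  pose proof (Rmin_l d (e / 2)); pose proof (Rmin_r d (e / 2)).
  exists (Rmin d (e / 2)); split; [apply Rmin_glb_lt; lra|].
  intros y Hy Fy.
  specialize (Hd' y ltac:(lra)). rewrite Fy in Hd'.
  apply Rabs_def2 in Hd'. apply Rabs_def2 in Hy. unfold e in *.
  destruct (Rle_or_lt 0 (f x - x)).
  - rewrite Rabs_right in * by lra. lra.
  - rewrite Rabs_left in * by lra. lra.
Qed.

Lemma PLo_continuity (f : R -> R) : PLo f -> continuity f.
Proof.
  intros Hf x eps Heps. destruct (PLo_cont f Hf x eps Heps) as [d [Hd Hd']].
  exists d. split; [lra|]. intros y [_ Hy]. apply Hd', Hy.
Qed.

Lemma rderiv_eq (h : R -> R) p m : is_rderiv h p m -> rderiv h p = m.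
Proof.
  intros Hm. unfold rderiv.
  pose proof (epsilon_spec (inhabits 0) (fun l => is_rderiv h p l) (ex_intro _ m Hm)) as He.
  exact (filterlim_locally_unique (F := at_right p) _ _ _ He Hm).
Qed.

Lemma lderiv_eq (h : R -> R) p m : is_lderiv h p m -> lderiv h p = m.
Proof.
  intros Hm. unfold lderiv.
  pose proof (epsilon_spec (inhabits 0) (fun l => is_lderiv h p l) (ex_intro _ m Hm)) as He.
  exact (filterlim_locally_unique (F := at_left p) _ _ _ He Hm).
Qed.

Lemma rderiv_affine (h : R -> R) p del m : 0 < del ->
  (forall y, p <= y <= p + del -> h y = h p + m * (y - p)) -> rderiv h p = m.
Proof.
  intros Hdel Hh. apply rderiv_eq.
  apply filterlim_ext_loc with (f := fun _ => m); [|apply filterlim_const].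
  exists (mkposreal del Hdel). intros y Hy Hpy.
  cbn in Hy. unfold AbsRing_ball, abs, minus, plus, opp in Hy; cbn in Hy.
  apply Rabs_def2 in Hy. rewrite (Hh y) by lra. field; lra.
Qed.

Lemma lderiv_affine (h : R -> R) p del m : 0 < del ->
  (forall y, p - del <= y <= p -> h y = h p + m * (y - p)) -> lderiv h p = m.
Proof.
  intros Hdel Hh. apply lderiv_eq.
  apply filterlim_ext_loc with (f := fun _ => m); [|apply filterlim_const].
  exists (mkposreal del Hdel). intros y Hy Hpy.
  cbn in Hy. unfold AbsRing_ball, abs, minus, plus, opp in Hy; cbn in Hy.
  apply Rabs_def2 in Hy. rewrite (Hh y) by lra. field; lra.
Qed.

Lemma PLo_rgerm (h : R -> R) : PLo h -> forall p d0, 0 < d0 ->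
  exists del, 0 < del /\ del <= d0 /\ 0 < rderiv h p /\
    forall y, p <= y <= p + del -> h y = h p + rderiv h p * (y - p).
Proof.
  intros Hh p d0 Hd0.
  destruct (PLo_affine_germs h Hh p) as [del [Hdel [_ [_ [m [c [_ HR]]]]]]].
  set (d := Rmin del d0).
  pose proof (Rmin_l del d0); pose proof (Rmin_r del d0).
  assert (Hd : 0 < d) by (apply Rmin_glb_lt; lra).
  assert (Hlin : forall y, p <= y <= p + d -> h y = h p + m * (y - p)).
  { intros y Hy. rewrite (HR y), (HR p) by (unfold d in *; lra). ring. }
  rewrite (rderiv_affine h p d m Hd Hlin).
  exists d; split; [exact Hd|split; [unfold d; lra|split; [|exact Hlin]]].
  pose proof (PLo_lt h Hh p (p + d) ltac:(lra)) as Hlt.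
  rewrite (Hlin (p + d)) in Hlt by lra. nra.
Qed.

Lemma PLo_lgerm (h : R -> R) : PLo h -> forall p d0, 0 < d0 ->
  exists del, 0 < del /\ del <= d0 /\ 0 < lderiv h p /\
    forall y, p - del <= y <= p -> h y = h p + lderiv h p * (y - p).
Proof.
  intros Hh p d0 Hd0.
  destruct (PLo_affine_germs h Hh p) as [del [Hdel [m [c [_ [_ [HL _]]]]]]].
  set (d := Rmin del d0).
  pose proof (Rmin_l del d0); pose proof (Rmin_r del d0).
  assert (Hd : 0 < d) by (apply Rmin_glb_lt; lra).
  assert (Hlin : forall y, p - d <= y <= p -> h y = h p + m * (y - p)).
  { intros y Hy. rewrite (HL y), (HL p) by (unfold d in *; lra). ring. }
  rewrite (lderiv_affine h p d m Hd Hlin).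
  exists d; split; [exact Hd|split; [unfold d; lra|split; [|exact Hlin]]].
  pose proof (PLo_lt h Hh (p - d) p ltac:(lra)) as Hlt.
  rewrite (Hlin (p - d)) in Hlt by lra. nra.
Qed.

Lemma rderiv_comp (g h : R -> R) p : PLo g -> PLo h ->
  rderiv (fun x => h (g x)) p = rderiv g p * rderiv h (g p).
Proof.
  intros Hg Hh.
  destruct (PLo_rgerm g Hg p 1 ltac:(lra)) as [dg [Hdg [_ [Hm Eg]]]].
  destruct (PLo_rgerm h Hh (g p) 1 ltac:(lra)) as [dh [Hdh [_ [_ Eh]]]].
  set (m := rderiv g p) in *.
  set (d := Rmin dg (dh / m)).
  pose proof (Rmin_l dg (dh / m)); pose proof (Rmin_r dg (dh / m)).
  assert (Hd : 0 < d) by (apply Rmin_glb_lt; [lra | apply Rdiv_lt_0_compat; lra]).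
  apply (rderiv_affine _ p d); auto.
  intros y Hy. rewrite (Eg y) by (unfold d in *; lra).
  assert (m * (y - p) <= dh).
  { replace dh with (m * (dh / m)) by (field; lra).
    apply Rmult_le_compat_l; unfold d in *; lra. }
  rewrite Eh by nra. ring.
Qed.

Lemma lderiv_comp (g h : R -> R) p : PLo g -> PLo h ->
  lderiv (fun x => h (g x)) p = lderiv g p * lderiv h (g p).
Proof.
  intros Hg Hh.
  destruct (PLo_lgerm g Hg p 1 ltac:(lra)) as [dg [Hdg [_ [Hm Eg]]]].
  destruct (PLo_lgerm h Hh (g p) 1 ltac:(lra)) as [dh [Hdh [_ [_ Eh]]]].
  set (m := lderiv g p) in *.
  set (d := Rmin dg (dh / m)).
  pose proof (Rmin_l dg (dh / m)); pose proof (Rmin_r dg (dh / m)).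
  assert (Hd : 0 < d) by (apply Rmin_glb_lt; [lra | apply Rdiv_lt_0_compat; lra]).
  apply (lderiv_affine _ p d); auto.
  intros y Hy. rewrite (Eg y) by (unfold d in *; lra).
  assert (m * (p - y) <= dh).
  { replace dh with (m * (dh / m)) by (field; lra).
    apply Rmult_le_compat_l; unfold d in *; lra. }
  rewrite Eh by nra. ring.
Qed.

Lemma rderiv_id p : rderiv (fun x => x) p = 1.
Proof. apply (rderiv_affine _ p 1); [lra | intros; ring]. Qed.

Lemma lderiv_id p : lderiv (fun x => x) p = 1.
Proof. apply (lderiv_affine _ p 1); [lra | intros; ring]. Qed.

(** * Orbitals *)

Definition closed_pred (P : R -> Prop) : Prop :=
  forall y, ~ P y -> exists del, 0 < del /\ forall z, Rabs (z - y) < del -> ~ P z.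

Lemma closed_pred_last_below (P : R -> Prop) x0 : closed_pred P ->
  (exists y, y <= x0 /\ P y) ->
  exists c, c <= x0 /\ P c /\ forall y, c < y <= x0 -> ~ P y.
Proof.
  intros Hc Hne.
  set (E := fun y => y <= x0 /\ P y).
  assert (Hb : bound E) by (exists x0; intros y [Hy _]; auto).
  destruct (completeness E Hb Hne) as [c [Hub Hlub]].
  assert (Hcx : c <= x0) by (apply Hlub; intros y [Hy _]; auto).
  exists c; split; [auto|split].
  - apply NNPP; intro Hn. destruct (Hc c Hn) as [d [Hd Hd']].
    destruct (classic (exists y, E y /\ c - d / 2 < y)) as [[y [Ey Hy]]|Hno].
    + assert (y <= c) by (apply Hub; auto).
      apply (Hd' y); [apply Rabs_def1; lra | apply Ey].
    + assert (c <= c - d / 2); [|lra].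
      apply Hlub. intros y Ey. apply Rnot_lt_le. intro. apply Hno; eauto.
  - intros y Hy Py. assert (y <= c) by (apply Hub; split; [lra|auto]). lra.
Qed.

Lemma closed_pred_first_above (P : R -> Prop) x0 : closed_pred P ->
  (exists y, x0 <= y /\ P y) ->
  exists d, x0 <= d /\ P d /\ forall y, x0 <= y < d -> ~ P y.
Proof.
  intros Hc [y0 [Hy0 Py0]].
  destruct (closed_pred_last_below (fun z => P (- z)) (- x0)) as [c [Hc1 [Hc2 Hc3]]].
  - intros z Hz. destruct (Hc (- z) Hz) as [d [Hd Hd']]. exists d; split; auto.
    intros w Hw. apply Hd'. replace (- w - - z) with (- (w - z)) by ring.
    rewrite Rabs_Ropp; auto.
  - exists (- y0). rewrite Ropp_involutive. split; [lra|auto].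
  - exists (- c). split; [lra|split; auto].
    intros y Hy Py. apply (Hc3 (- y)); [lra|]. rewrite Ropp_involutive; auto.
Qed.

(* [group_orbital] does not use the subgroup structure, so it makes sense for any family of maps. *)
Lemma exists_group_orbital (F : (R -> R) -> Prop) k0 x0 :
  (forall k, F k -> PLo k) -> F k0 -> k0 x0 <> x0 ->
  exists c d, c < x0 < d /\ group_orbital F c d.
Proof.
  intros HF Fk0 Hk0.
  set (P := fun y => forall k, F k -> k y = y).
  assert (HP : closed_pred P).
  { intros y Hy. apply not_all_ex_not in Hy as [k Hk].
    apply imply_to_and in Hk as [Fk Hky].
    destruct (PLo_moved_nbhd k y (HF k Fk) Hky) as [d [Hd Hd']].
    exists d; split; auto. intros z Hz Pz. apply (Hd' z Hz), Pz, Fk. }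
  destruct (HF k0 Fk0) as [Hout [F0 [F1 _]]].
  assert (Hx0 : 0 < x0 < 1).
  { split; apply Rnot_le_lt; intro Hx; apply Hk0.
    - destruct (Req_dec x0 0) as [->|]; [auto | apply Hout; lra].
    - destruct (Req_dec x0 1) as [->|]; [auto | apply Hout; lra]. }
  assert (P0 : P 0) by (intros k Fk; apply (HF k Fk)).
  assert (P1 : P 1) by (intros k Fk; apply (HF k Fk)).
  assert (nP : ~ P x0) by (intro Hp; apply Hk0, Hp, Fk0).
  destruct (closed_pred_last_below P x0 HP (ex_intro _ 0 (conj (Rlt_le _ _ (proj1 Hx0)) P0)))
    as [c [Hc1 [Hc2 Hc3]]].
  destruct (closed_pred_first_above P x0 HP (ex_intro _ 1 (conj (Rlt_le _ _ (proj2 Hx0)) P1)))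
    as [d [Hd1 [Hd2 Hd3]]].
  assert (c <> x0) by (intro; subst; auto).
  assert (d <> x0) by (intro; subst; auto).
  exists c, d. split; [lra|split; [lra|split]].
  - intros x Hx.
    assert (nPx : ~ P x) by (destruct (Rle_or_lt x x0); [apply Hc3 | apply Hd3]; lra).
    apply not_all_ex_not in nPx as [k Hk]. apply imply_to_and in Hk as [Fk Hkx]. eauto.
  - intros k Fk; split; [apply Hc2 | apply Hd2]; auto.
Qed.

Lemma group_orbital_at_left (F : (R -> R) -> Prop) k0 u x0 :
  (forall k, F k -> PLo k) -> (forall k, F k -> k u = u) -> F k0 -> u < x0 ->
  (forall y, u < y <= x0 -> k0 y <> y) ->
  exists d, x0 < d /\ group_orbital F u d.
Proof.
  intros HF Hu Fk0 Hux Hmv.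
  destruct (exists_group_orbital F k0 x0 HF Fk0 (Hmv x0 ltac:(lra)))
    as [c [d [Hcd [Hcd' [Hmoved Hfix]]]]].
  assert (c = u) as ->; [|exists d; split; [lra | split; [lra | split; auto]]].
  destruct (Rtotal_order c u) as [Hl|[|Hl]]; auto; exfalso.
  - destruct (Hmoved u ltac:(lra)) as [k [Fk Hk]]. apply Hk, Hu, Fk.
  - apply (Hmv c); [lra | apply (Hfix k0 Fk0)].
Qed.

Lemma group_orbital_at_right (F : (R -> R) -> Prop) k0 v x0 :
  (forall k, F k -> PLo k) -> (forall k, F k -> k v = v) -> F k0 -> x0 < v ->
  (forall y, x0 <= y < v -> k0 y <> y) ->
  exists c, c < x0 /\ group_orbital F c v.
Proof.
  intros HF Hv Fk0 Hxv Hmv.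
  destruct (exists_group_orbital F k0 x0 HF Fk0 (Hmv x0 ltac:(lra)))
    as [c [d [Hcd [Hcd' [Hmoved Hfix]]]]].
  assert (d = v) as ->; [|exists c; split; [lra | split; [lra | split; auto]]].
  destruct (Rtotal_order d v) as [Hl|[|Hl]]; auto; exfalso.
  - apply (Hmv d); [lra | apply (Hfix k0 Fk0)].
  - destruct (Hmoved v ltac:(lra)) as [k [Fk Hk]]. apply Hk, Hv, Fk.
Qed.

Lemma orbital_of_group_orbital_eq (h : R -> R) c d :
  group_orbital (fun k => k = h) c d -> orbital h c d.
Proof.
  intros [Hcd [Hmv Hfix]]. split; [auto|split; [|apply Hfix; auto]].
  intros x Hx. destruct (Hmv x Hx) as [k [-> Hk]]; auto.
Qed.

Lemma orbital_at_left (h : R -> R) u x0 : PLo h -> h u = u -> u < x0 ->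
  (forall y, u < y <= x0 -> h y <> y) -> exists e, x0 < e /\ orbital h u e.
Proof.
  intros Hh Hu Hux Hmv.
  destruct (group_orbital_at_left (fun k => k = h) h u x0) as [e [He Ho]]; auto;
    try (intros k ->; auto).
  exists e; split; [auto | apply orbital_of_group_orbital_eq, Ho].
Qed.

Lemma orbital_at_right (h : R -> R) v x0 : PLo h -> h v = v -> x0 < v ->
  (forall y, x0 <= y < v -> h y <> y) -> exists c, c < x0 /\ orbital h c v.
Proof.
  intros Hh Hv Hxv Hmv.
  destruct (group_orbital_at_right (fun k => k = h) h v x0) as [c [Hc Ho]]; auto;
    try (intros k ->; auto).
  exists c; split; [auto | apply orbital_of_group_orbital_eq, Ho].
Qed.

Lemma orbital_unique (k : R -> R) x1 w1 x2 w2 z : orbital k x1 w1 -> orbital k x2 w2 ->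
  x1 < z < w1 -> x2 < z < w2 -> x1 = x2 /\ w1 = w2.
Proof.
  intros [_ [M1 [F1 G1]]] [_ [M2 [F2 G2]]] Z1 Z2.
  split.
  - destruct (Rtotal_order x1 x2) as [Hl|[|Hl]]; auto; exfalso;
      [apply (M1 x2) | apply (M2 x1)]; auto; lra.
  - destruct (Rtotal_order w1 w2) as [Hl|[|Hl]]; auto; exfalso;
      [apply (M2 w1) | apply (M1 w2)]; auto; lra.
Qed.

Lemma PLo_orbital_breakpoints (k : R -> R) : PLo k ->
  exists n (xs : nat -> R), forall x w, orbital k x w ->
    exists j, (j <= n)%nat /\ x < xs j < w.
Proof.
  intros Hk. pose proof Hk as [Hout [_ [_ [_ [n [xs [X0 [Xn Hp]]]]]]]].
  assert (Hinc : forall i, (i < n)%nat -> xs i < xs (S i)) by (intros i Hi; apply Hp, Hi).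
  exists n, xs. intros x w [Hxw [Hm [Fx Fw]]].
  assert (Hx0 : 0 <= x).
  { apply Rnot_lt_le; intro Hl.
    pose proof (Rmin_l 0 w); pose proof (Rmin_r 0 w).
    assert (x < Rmin 0 w) by (apply Rmin_glb_lt; lra).
    apply (Hm ((x + Rmin 0 w) / 2)); [lra | apply Hout; lra]. }
  assert (Hx1 : x < 1).
  { apply Rnot_le_lt; intro Hl. apply (Hm ((x + w) / 2)); [lra | apply Hout; lra]. }
  destruct (locate_piece_r xs n X0 Xn Hinc x (conj Hx0 Hx1)) as [j [Hj Hjx]].
  exists (S j). split; [lia|]. split; [lra|].
  apply Rnot_le_lt; intro Hw.
  destruct (Hp j Hj) as [_ [m [c Hmc]]].
  assert (E1 : x = m * x + c) by (rewrite <- Fx at 1; apply Hmc; lra).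
  assert (E2 : w = m * w + c) by (rewrite <- Fw at 1; apply Hmc; lra).
  assert (Hm1 : m = 1) by (apply (Rmult_eq_reg_r (w - x)); lra).
  apply (Hm ((x + w) / 2)); [lra|]. rewrite Hmc by lra. subst m. lra.
Qed.

(* Finitely many orbitals, each with ratio (w - a) / (x - a) > 1. *)
Lemma orbital_ratio_bound (k : R -> R) a : PLo k -> exists r, 1 < r /\
  forall x w, a < x -> orbital k x w -> r * (x - a) <= w - a.
Proof.
  intros Hk. destruct (PLo_orbital_breakpoints k Hk) as [n [xs Hbk]].
  assert (Hind : forall N, exists r, 1 < r /\ forall j, (j < N)%nat ->
     forall x w, a < x -> orbital k x w -> x < xs j < w -> r * (x - a) <= w - a).
  { induction N as [|N [r [Hr Hr']]].
    { exists 2. split; [lra | intros j Hj; lia]. }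
    destruct (classic (exists x w, a < x /\ orbital k x w /\ x < xs N < w)) as
      [[x0 [w0 [Hax0 [Ho0 Hb0]]]]|Hno].
    - set (r0 := (w0 - a) / (x0 - a)).
      assert (Er0 : r0 * (x0 - a) = w0 - a) by (unfold r0; field; lra).
      assert (Hr0 : 1 < r0).
      { apply (Rmult_lt_reg_r (x0 - a)); [lra|]. destruct Ho0. lra. }
      pose proof (Rmin_l r r0); pose proof (Rmin_r r r0).
      exists (Rmin r r0). split; [apply Rmin_glb_lt; lra|].
      intros j Hj x w Hax Ho Hb.
      destruct (Nat.lt_ge_cases j N) as [Hjn|Hjn].
      + specialize (Hr' j Hjn x w Hax Ho Hb).
        apply Rle_trans with (r * (x - a)); [apply Rmult_le_compat_r|]; lra.
      + assert (j = N) as -> by lia.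
        destruct (orbital_unique k x w x0 w0 (xs N) Ho Ho0 Hb Hb0) as [-> ->].
        rewrite <- Er0. apply Rmult_le_compat_r; lra.
    - exists r. split; auto. intros j Hj x w Hax Ho Hb.
      destruct (Nat.lt_ge_cases j N) as [Hjn|Hjn]; [apply (Hr' j Hjn); auto|].
      assert (j = N) as -> by lia. exfalso; apply Hno; eauto. }
  destruct (Hind (S n)) as [r [Hr Hr']].
  exists r. split; auto. intros x w Hax Ho.
  destruct (Hbk x w Ho) as [j [Hjn Hj]].
  apply (Hr' j ltac:(lia)); auto.
Qed.

Lemma PLo_support_start (k : R -> R) lo : PLo k -> (exists z, k z <> z) ->
  (forall y, k y <> y -> lo < y) ->
  exists u du, lo <= u /\ 0 < du /\ k u = u /\ (forall y, k y <> y -> u < y) /\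
    (forall y, u < y <= u + du -> k y <> y).
Proof.
  intros Hk [z Hz] Hlo.
  set (E := fun y => exists x, k x <> x /\ y = - x).
  assert (HbE : bound E) by (exists (- lo); intros y [x [Hx ->]]; pose proof (Hlo x Hx); lra).
  destruct (completeness E HbE (ex_intro _ (- z) (ex_intro _ z (conj Hz eq_refl))))
    as [M [Hub Hlub]].
  set (u := - M).
  assert (Hu1 : forall x, k x <> x -> u <= x).
  { intros x Hx. assert (- x <= M) by (apply Hub; exists x; auto). unfold u; lra. }
  assert (Hu2 : forall e, 0 < e -> exists x, k x <> x /\ x < u + e).
  { intros e He. apply NNPP; intro Hn. assert (M <= M - e); [|lra].
    apply Hlub. intros y [x [Hx ->]]. apply Rnot_lt_le; intro. apply Hn.
    exists x; split; auto. unfold u; lra. }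
  assert (Hlou : lo <= u).
  { assert (M <= - lo); [|unfold u; lra]. apply Hlub. intros y [x [Hx ->]].
    pose proof (Hlo x Hx). lra. }
  assert (Hku : k u = u).
  { apply NNPP; intro Hn.
    destruct (PLo_moved_nbhd k u Hk Hn) as [d [Hd Hd']].
    pose proof (Hu1 (u - d / 2) (Hd' (u - d / 2) ltac:(apply Rabs_def1; lra))). lra. }
  destruct (PLo_rgerm k Hk u 1 Rlt_0_1) as [du [Hdu [_ [_ Ek]]]].
  rewrite Hku in Ek. set (m := rderiv k u) in *.
  assert (Hm1 : m <> 1).
  { intro E1. destruct (Hu2 du Hdu) as [x [Hx Hxu]].
    pose proof (Hu1 x Hx). apply Hx. rewrite Ek, E1 by lra. ring. }
  exists u, du. split; [auto|split; [auto|split; [auto|split]]].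
  - intros y Hy. destruct (Hu1 y Hy) as [|E1]; [auto | subst; tauto].
  - intros y Hy. rewrite Ek by lra. intro E1. apply Hm1.
    apply (Rmult_eq_reg_r (y - u)); lra.
Qed.

Lemma linear_conjugate_moves_orbital_end (k g : R -> R) a p d r mu :
  PLo g -> orbital k p d -> a < p -> r * (p - a) <= d - a -> 1 < mu < r ->
  g (a + (d - a) / mu) = d -> g (k (a + (d - a) / mu)) <> d.
Proof.
  intros Hg [Hpd [Hmv _]] Hap Hrat Hmu Eg E.
  set (z := a + (d - a) / mu) in *.
  assert (Hz : p < z < d).
  { assert (Ez : (z - a) * mu = d - a) by (unfold z; field; lra).
    assert (mu * (p - a) < r * (p - a)) by (apply Rmult_lt_compat_r; lra).
    split; apply (Rmult_lt_reg_r mu); nra. }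
  apply (Hmv z Hz), (PLo_inj g Hg). congruence.
Qed.

(** * Iterates and affine germs *)

Lemma iter_affine (g : R -> R) (P : R -> Prop) p k :
  (forall z, P z -> P (g z)) -> (forall z, P z -> g z = p + k * (z - p)) ->
  forall M z, P z -> Nat.iter M g z = p + k ^ M * (z - p).
Proof.
  intros HP Hg M z Pz. induction M as [|M IH]; simpl; [ring|].
  rewrite IH, Hg; [ring|]. rewrite <- IH. apply Nat.iter_invariant; auto.
Qed.

Lemma iter_expand (g : R -> R) a l D : 1 <= l ->
  (forall z, a <= z <= a + D -> g z = a + l * (z - a)) ->
  forall M z, a <= z -> l ^ M * (z - a) <= D -> Nat.iter M g z = a + l ^ M * (z - a).
Proof.
  intros Hl Hg M z Hz. induction M as [|M IH]; simpl; intros HD; [ring|].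
  pose proof (pow_R1_Rle l M Hl).
  assert (0 <= l ^ M * (z - a)) by (apply Rmult_le_pos; lra).
  assert (l ^ M * (z - a) <= l * (l ^ M * (z - a))) by nra.
  rewrite IH, Hg by lra. ring.
Qed.

Lemma iter_escapes (f : R -> R) x c : PLo f ->
  (forall y, x <= y <= c -> y < f y) -> exists n, c < Nat.iter n f x.
Proof.
  intros Hf Hup. apply NNPP; intro Hn.
  assert (Hle : forall n, Nat.iter n f x <= c).
  { intro n. apply Rnot_lt_le; intro Hl. apply Hn; eauto. }
  set (Orb := fun y => exists n, y = Nat.iter n f x).
  assert (HbS : bound Orb) by (exists c; intros y [n ->]; auto).
  destruct (completeness Orb HbS (ex_intro _ x (ex_intro _ O eq_refl))) as [L [Hub Hlub]].
  assert (HLc : L <= c) by (apply Hlub; intros y [n ->]; auto).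
  assert (HxL : x <= L) by (apply Hub; exists O; auto).
  pose proof (Hup L (conj HxL HLc)) as HfL.
  destruct (PLo_cont f Hf L (f L - L) ltac:(lra)) as [d [Hd Hd']].
  assert (Hnear : exists n, L - d < Nat.iter n f x).
  { apply NNPP; intro Hn2. assert (L <= L - d); [|lra].
    apply Hlub. intros y [n ->]. apply Rnot_lt_le; intro. apply Hn2; eauto. }
  destruct Hnear as [n Hn3].
  assert (Nat.iter n f x <= L) by (apply Hub; exists n; auto).
  assert (Nat.iter (S n) f x <= L) by (apply Hub; exists (S n); auto).
  specialize (Hd' (Nat.iter n f x) ltac:(apply Rabs_def1; lra)). apply Rabs_def2 in Hd'.
  simpl in *. lra.
Qed.

Lemma pow_vanishes k e : 0 <= k < 1 -> 0 < e -> exists M, k ^ M < e.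
Proof.
  intros Hk He. destruct (pow_lt_1_zero k ltac:(rewrite Rabs_right; lra) e He) as [M HM].
  exists M. specialize (HM M (le_n M)).
  rewrite Rabs_right in HM by (apply Rle_ge, pow_le; lra). lra.
Qed.

Lemma pow_unbounded l K : 1 < l -> exists M, K < l ^ M.
Proof.
  intros Hl. destruct (Pow_x_infinity l ltac:(rewrite Rabs_right; lra) (K + 1)) as [M HM].
  exists M. specialize (HM M (le_n M)).
  rewrite Rabs_right in HM by (apply Rle_ge, pow_le; lra). lra.
Qed.

Lemma affine_inverse (g gi : R -> R) a l E : (forall x, gi (g x) = x) -> 0 < l ->
  (forall y, a <= y <= a + E -> g y = a + l * (y - a)) ->
  forall w, a <= w <= a + l * E -> gi w = a + (w - a) / l.
Proof.
  intros Hinv Hl Hg w Hw.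
  assert (0 <= (w - a) / l <= E).
  { split; [apply Rdiv_le_0_compat; lra|].
    apply (Rmult_le_reg_l l); [lra|]. replace (l * ((w - a) / l)) with (w - a) by (field; lra).
    lra. }
  rewrite <- (Hinv (a + (w - a) / l)), Hg by lra. f_equal. field. lra.
Qed.

(* Locally, Phi would conjugate the linear map with fixed point a to one with fixed point b;
   but an affine Phi sends a to a point other than b. *)
Lemma affine_germs_not_conjugate (Phi : R -> R) a b ys dl mP mu nu :
  a < ys -> 0 < dl -> 0 < mP -> Phi ys < b -> 1 < mu ->
  mu * (ys - a + dl / 2) <= ys - a + dl ->
  (forall y, ys <= y <= ys + dl -> Phi y = Phi ys + mP * (y - ys)) ->
  (forall y, ys <= y <= ys + dl / 2 -> ys <= a + mu * (y - a) <= ys + dl ->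
     Phi (a + mu * (y - a)) - b = nu * (Phi y - b)) ->
  False.
Proof.
  intros Hys Hdl HmP Hb Hmu Hwin EP Hconj.
  pose proof (Hconj ys ltac:(lra) ltac:(nra)) as K1.
  pose proof (Hconj (ys + dl / 2) ltac:(lra) ltac:(nra)) as K2.
  rewrite (EP (a + mu * (ys - a))) in K1 by nra.
  rewrite (EP (a + mu * (ys + dl / 2 - a))), (EP (ys + dl / 2)) in K2 by nra.
  assert (Hnu : mu = nu).
  { apply (Rmult_eq_reg_r (mP * (dl / 2))); [lra|].
    apply Rmult_integral_contrapositive; lra. }
  subst nu.
  assert (Hz : (mu - 1) * (mP * (ys - a) - (Phi ys - b)) = 0) by lra.
  apply Rmult_integral in Hz as [?|?]; [lra|].
  assert (0 < mP * (ys - a)) by (apply Rmult_lt_0_compat; lra). lra.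
Qed.

(** * Discrete subgroups of R *)

Lemma sub_closed_int_mult (S : R -> Prop) m :
  (forall x y, S x -> S y -> S (x - y)) -> S m -> forall k : Z, S (IZR k * m).
Proof.
  intros Hsub Hm.
  assert (S0 : S 0) by (replace 0 with (m - m) by ring; auto).
  assert (Hopp : S (- m)) by (replace (- m) with (0 - m) by ring; auto).
  induction k as [|k IH|k IH] using Z.peano_ind.
  - rewrite Rmult_0_l; auto.
  - rewrite succ_IZR. replace ((IZR k + 1) * m) with (IZR k * m - - m) by ring. auto.
  - rewrite <- Z.sub_1_r, minus_IZR. replace ((IZR k - 1) * m) with (IZR k * m - m) by ring.
    auto.
Qed.

Lemma discrete_subgroup_least_pos (S : R -> Prop) eps :
  (forall x y, S x -> S y -> S (x - y)) -> 0 < eps ->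
  (forall x, S x -> ~ (0 < x < eps)) -> (exists x, S x /\ x <> 0) ->
  exists m, 0 < m /\ S m /\ forall x, S x -> 0 < x -> m <= x.
Proof.
  intros Hsub Heps Hgap [x0 [Sx0 Hx0]].
  set (P := fun x => S x /\ 0 < x).
  assert (HP : forall x, P x -> eps <= x).
  { intros x [Sx Hx]. apply Rnot_lt_le; intro. apply (Hgap x); auto. }
  assert (Hne : exists y, P (- y)).
  { destruct (Rlt_or_le 0 x0).
    - exists (- x0). rewrite Ropp_involutive. split; auto.
    - exists x0. split; [|lra]. replace (- x0) with ((x0 - x0) - x0) by ring. auto. }
  assert (Hb : bound (fun y => P (- y))).
  { exists (- eps). intros y Py. pose proof (HP _ Py). lra. }
  destruct (completeness _ Hb Hne) as [M [Hub Hlub]].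
  set (m := - M).
  assert (Hm1 : forall x, P x -> m <= x).
  { intros x Px. assert (- x <= M); [|unfold m; lra].
    apply Hub. red. rewrite Ropp_involutive. auto. }
  assert (Hm2 : forall eta, m < eta -> exists x, P x /\ x < eta).
  { intros eta Heta. apply NNPP; intro Hn. assert (M <= - eta); [|unfold m in *; lra].
    apply Hlub. intros y Py. apply Rnot_lt_le; intro. apply Hn. exists (- y). split; auto; lra. }
  assert (Hmeps : eps <= m).
  { assert (M <= - eps); [|unfold m; lra].
    apply Hlub. intros y Py. pose proof (HP _ Py). lra. }
  exists m. split; [lra|split; [|intros x Sx Hx; apply Hm1; split; auto]].
  (* otherwise two elements of P in (m, 2m) would differ by a positive element below m *)
  apply NNPP; intro Hn.
  assert (Hgt : forall x, P x -> m < x).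
  { intros x Px. destruct (Hm1 x Px) as [|E]; [auto | subst; destruct Px; tauto]. }
  destruct (Hm2 (2 * m) ltac:(lra)) as [g1 [Pg1 Hg1]].
  destruct (Hm2 g1 (Hgt g1 Pg1)) as [g2 [Pg2 Hg2]].
  assert (Pd : P (g1 - g2)) by (split; [apply Hsub; [apply Pg1 | apply Pg2] | lra]).
  pose proof (Hm1 _ Pd). pose proof (Hgt g2 Pg2). lra.
Qed.

Lemma discrete_subgroup_cyclic (S : R -> Prop) eps :
  (forall x y, S x -> S y -> S (x - y)) -> 0 < eps ->
  (forall x, S x -> ~ (0 < x < eps)) -> (exists x, S x /\ x <> 0) ->
  exists m, 0 < m /\ S m /\ forall x, S x -> exists k : Z, x = IZR k * m.
Proof.
  intros Hsub Heps Hgap Hne.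
  destruct (discrete_subgroup_least_pos S eps Hsub Heps Hgap Hne) as [m [Hm [Sm Hmin]]].
  exists m. split; [auto | split; [auto|]].
  intros x Sx. exists (Zfloor (x / m)).
  pose proof (Zfloor_bound (x / m)) as [Hk1 Hk2].
  set (k := Zfloor (x / m)) in *.
  assert (Hlo : IZR k * m <= x).
  { apply (Rmult_le_compat_r m) in Hk1; [|lra].
    replace (x / m * m) with x in Hk1 by (field; lra). lra. }
  assert (Hhi : x < IZR k * m + m).
  { apply (Rmult_lt_compat_r m) in Hk2; [|lra].
    replace (x / m * m) with x in Hk2 by (field; lra). lra. }
  assert (Sr : S (x - IZR k * m)) by (apply Hsub; [auto | apply sub_closed_int_mult; auto]).
  destruct (Rle_lt_or_eq_dec 0 (x - IZR k * m) ltac:(lra)) as [Hpos|E]; [|lra].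
  pose proof (Hmin _ Sr Hpos). lra.
Qed.

(** * Subgroups of PL_o(I) with a single orbital *)

Definition log_rslope (h : R -> R) (p : R) : R := ln (rderiv h p).
Definition log_lslope (h : R -> R) (p : R) : R := ln (lderiv h p).

Lemma log_rslope_id p : log_rslope (fun x => x) p = 0.
Proof. unfold log_rslope. rewrite rderiv_id. apply ln_1. Qed.

Lemma log_lslope_id p : log_lslope (fun x => x) p = 0.
Proof. unfold log_lslope. rewrite lderiv_id. apply ln_1. Qed.

Lemma ln_eq0_iff x : 0 < x -> (ln x = 0 <-> x = 1).
Proof.
  intros Hx. split; intro E; [|subst; apply ln_1].
  apply ln_inv; [lra | lra | rewrite ln_1; auto].
Qed.

Lemma phi_eq a b h : phi a b h = (log_rslope h a, log_lslope h b).
Proof. reflexivity. Qed.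

Lemma pointwise_stabilizer_subgroup (G : (R -> R) -> Prop) (Z : R -> Prop) :
  is_subgroup G -> is_subgroup (fun g => G g /\ forall y, Z y -> g y = y).
Proof.
  intros [Gid [Gmul Ginv]]. split; [|split].
  - split; auto.
  - intros g h [Gg Fg] [Gh Fh]. split; [auto|]. intros y Zy. unfold gmul. rewrite Fg, Fh; auto.
  - intros g [Gg Fg]. destruct (Ginv g Gg) as [g' [Gg' Eg]].
    exists g'. split; [split; auto|auto].
    intros y Zy. rewrite <- (Fg y Zy) at 1. apply Eg.
Qed.

Section SingleOrbital.

Variables (H : (R -> R) -> Prop) (a b : R).
Hypothesis H_PL : PL_subgroup H.
Hypothesis H_orbital : forall c d, group_orbital H c d <-> (c = a /\ d = b).

Lemma H_subgroup : is_subgroup H.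
Proof. apply H_PL. Qed.

Lemma H_PLo h : H h -> PLo h.
Proof. apply H_PL. Qed.

Lemma H_id : H (fun x => x).
Proof. apply H_subgroup. Qed.

Lemma H_comp g h : H g -> H h -> H (fun x => h (g x)).
Proof. apply H_subgroup. Qed.

Lemma H_inv g : H g -> exists g', H g' /\ forall x, g' (g x) = x /\ g (g' x) = x.
Proof. apply H_subgroup. Qed.

Lemma H_iter h n : H h -> H (Nat.iter n h).
Proof.
  intros Hh. induction n as [|n IH]; [apply H_id|].
  exact (H_comp _ _ IH Hh).
Qed.

Lemma H_group_orbital : group_orbital H a b.
Proof. apply H_orbital; auto. Qed.

Lemma a_lt_b : a < b.
Proof. apply H_group_orbital. Qed.

Lemma H_fix_ends h : H h -> h a = a /\ h b = b.
Proof. apply H_group_orbital. Qed.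

Lemma H_moves_inside x : a < x < b -> exists g, H g /\ g x <> x.
Proof. apply H_group_orbital. Qed.

Lemma H_fix_outside h : H h -> forall x, x <= a \/ b <= x -> h x = x.
Proof.
  intros Hh x Hx. apply NNPP; intro Hhx.
  destruct (exists_group_orbital H h x H_PLo Hh Hhx) as [c [d [Hcd Ho]]].
  apply H_orbital in Ho as [-> ->]. lra.
Qed.

Lemma H_rgerm h : H h -> forall d0, 0 < d0 -> exists del, 0 < del /\ del <= d0 /\
  forall y, a <= y <= a + del -> h y = a + rderiv h a * (y - a).
Proof.
  intros Hh d0 Hd0. destruct (PLo_rgerm h (H_PLo h Hh) a d0 Hd0) as [del [? [? [_ E]]]].
  rewrite (proj1 (H_fix_ends h Hh)) in E. eauto.
Qed.

Lemma H_lgerm h : H h -> forall d0, 0 < d0 -> exists del, 0 < del /\ del <= d0 /\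
  forall y, b - del <= y <= b -> h y = b + lderiv h b * (y - b).
Proof.
  intros Hh d0 Hd0. destruct (PLo_lgerm h (H_PLo h Hh) b d0 Hd0) as [del [? [? [_ E]]]].
  rewrite (proj2 (H_fix_ends h Hh)) in E. eauto.
Qed.

Lemma H_rderiv_pos h : H h -> 0 < rderiv h a.
Proof. intros Hh. destruct (PLo_rgerm h (H_PLo h Hh) a 1 Rlt_0_1) as [? [? [? [? ?]]]]; auto. Qed.

Lemma H_lderiv_pos h : H h -> 0 < lderiv h b.
Proof. intros Hh. destruct (PLo_lgerm h (H_PLo h Hh) b 1 Rlt_0_1) as [? [? [? [? ?]]]]; auto. Qed.

Lemma log_rslope_comp g h : H g -> H h ->
  log_rslope (fun x => h (g x)) a = log_rslope g a + log_rslope h a.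
Proof.
  intros Hg Hh. unfold log_rslope.
  rewrite rderiv_comp by (apply H_PLo; auto). rewrite (proj1 (H_fix_ends g Hg)).
  apply ln_mult; apply H_rderiv_pos; auto.
Qed.

Lemma log_lslope_comp g h : H g -> H h ->
  log_lslope (fun x => h (g x)) b = log_lslope g b + log_lslope h b.
Proof.
  intros Hg Hh. unfold log_lslope.
  rewrite lderiv_comp by (apply H_PLo; auto). rewrite (proj2 (H_fix_ends g Hg)).
  apply ln_mult; apply H_lderiv_pos; auto.
Qed.

Lemma log_slopes_inv g g' : H g -> H g' -> (forall x, g' (g x) = x) ->
  log_rslope g' a = - log_rslope g a /\ log_lslope g' b = - log_lslope g b.
Proof.
  intros Hg Hg' E.
  assert (Ef : (fun x => g' (g x)) = (fun x => x)) by (apply functional_extensionality; auto).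
  pose proof (log_rslope_comp g g' Hg Hg') as E1. pose proof (log_lslope_comp g g' Hg Hg') as E2.
  rewrite Ef, log_rslope_id in E1. rewrite Ef, log_lslope_id in E2. split; lra.
Qed.

Lemma realizes_left_iff h : H h -> (realizes_left h a b <-> rderiv h a <> 1).
Proof.
  intros Hh. pose proof a_lt_b. destruct (H_fix_ends h Hh) as [Fa Fb]. split.
  - intros [q [[Haq [Hm _]] Hqb]] Hs.
    destruct (H_rgerm h Hh ((q - a) / 2) ltac:(lra)) as [del [Hd [Hdq E]]].
    apply (Hm (a + del)); [lra|]. rewrite E, Hs by lra. ring.
  - intros Hs.
    destruct (H_rgerm h Hh ((b - a) / 2) ltac:(lra)) as [del [Hd [Hdb E]]].
    assert (Hmv : forall y, a < y <= a + del -> h y <> y).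
    { intros y Hy. rewrite E by lra. intro E2. apply Hs.
      apply (Rmult_eq_reg_r (y - a)); lra. }
    destruct (orbital_at_left h a (a + del) (H_PLo h Hh) Fa ltac:(lra) Hmv)
      as [e [He Ho]].
    exists e. split; [exact Ho|].
    apply Rnot_lt_le; intro Hbe. apply (proj1 (proj2 Ho) b); [lra | auto].
Qed.

Lemma realizes_right_iff h : H h -> (realizes_right h a b <-> lderiv h b <> 1).
Proof.
  intros Hh. pose proof a_lt_b. destruct (H_fix_ends h Hh) as [Fa Fb]. split.
  - intros [p [Hap [Hpb [Hm _]]]] Hs.
    destruct (H_lgerm h Hh ((b - p) / 2) ltac:(lra)) as [del [Hd [Hdp E]]].
    apply (Hm (b - del)); [lra|]. rewrite E, Hs by lra. ring.
  - intros Hs.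
    destruct (H_lgerm h Hh ((b - a) / 2) ltac:(lra)) as [del [Hd [Hda E]]].
    assert (Hmv : forall y, b - del <= y < b -> h y <> y).
    { intros y Hy. rewrite E by lra. intro E2. apply Hs.
      apply (Rmult_eq_reg_r (y - b)); lra. }
    destruct (orbital_at_right h b (b - del) (H_PLo h Hh) Fb ltac:(lra) Hmv)
      as [c [Hc Ho]].
    exists c. split; [|exact Ho].
    apply Rnot_lt_le; intro Hca. apply (proj1 (proj2 Ho) a); [lra | auto].
Qed.

(* The infimum of the orbit of v would be a common fixed point inside (a, b). *)
Lemma H_orbit_near_a v : a < v < b -> forall eta, 0 < eta -> exists t, H t /\ t v < a + eta.
Proof.
  intros Hv eta Heta. apply NNPP; intro Hn.
  assert (Hge : forall t, H t -> a + eta <= t v).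
  { intros t Ht. apply Rnot_lt_le; intro. apply Hn; eauto. }
  set (E := fun y => exists t, H t /\ y = - t v).
  assert (HbE : bound E).
  { exists (- (a + eta)). intros y [t [Ht ->]]. specialize (Hge t Ht). lra. }
  destruct (completeness E HbE (ex_intro _ (- v) (ex_intro _ _ (conj H_id eq_refl))))
    as [M [Hub Hlub]].
  set (m := - M).
  assert (Hm1 : forall t, H t -> m <= t v).
  { intros t Ht. assert (- t v <= M) by (apply Hub; exists t; auto). unfold m; lra. }
  assert (Hm2 : forall e, 0 < e -> exists t, H t /\ t v < m + e).
  { intros e He. apply NNPP; intro Hn2. assert (M <= M - e); [|lra].
    apply Hlub. intros y [t [Ht ->]]. apply Rnot_lt_le; intro. apply Hn2.
    exists t; split; auto. unfold m; lra. }
  assert (Hma : a + eta <= m).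
  { assert (M <= - (a + eta)); [|unfold m; lra].
    apply Hlub. intros y [t [Ht ->]]. specialize (Hge t Ht). lra. }
  assert (Hmv : m <= v) by apply (Hm1 _ H_id).
  assert (Hup : forall s, H s -> m <= s m).
  { intros s Hs. apply Rnot_lt_le; intro Hl.
    destruct (PLo_cont s (H_PLo s Hs) m (m - s m) ltac:(lra)) as [d [Hd Hd']].
    destruct (Hm2 d Hd) as [t [Ht Htv]].
    pose proof (Hm1 t Ht).
    specialize (Hd' (t v) ltac:(apply Rabs_def1; lra)). apply Rabs_def2 in Hd'.
    pose proof (Hm1 _ (H_comp t s Ht Hs)). simpl in *. lra. }
  assert (Hfix : forall s, H s -> s m = m).
  { intros s Hs. destruct (H_inv s Hs) as [s' [Hs' Es]].
    pose proof (PLo_le s (H_PLo s Hs) m (s' m) (Hup s' Hs')).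
    rewrite (proj2 (Es m)) in *. pose proof (Hup s Hs). lra. }
  destruct (H_moves_inside m ltac:(lra)) as [g [Hg Hgm]]. apply Hgm, Hfix, Hg.
Qed.

Hypothesis H_balanced : balanced H.

(* Balance applied to G = H and its orbital (a, b). *)
Lemma log_rslope_eq0_iff h : H h -> (log_rslope h a = 0 <-> log_lslope h b = 0).
Proof.
  intros Hh. unfold log_rslope, log_lslope.
  rewrite (ln_eq0_iff _ (H_rderiv_pos h Hh)), (ln_eq0_iff _ (H_lderiv_pos h Hh)).
  destruct (H_balanced H H_subgroup (fun g Hg => Hg) a b H_group_orbital h Hh) as [Hlr Hrl].
  rewrite realizes_left_iff, realizes_right_iff in * by auto.
  split; intros E; apply NNPP; intro Hn; [apply (Hrl Hn) | apply (Hlr Hn)]; auto.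
Qed.

(** * The slopes at a form a discrete subgroup *)

(* Balance applied to the subgroup of H fixing every common fixed point of k and c. *)
Lemma stabilizer_orbital_end k c u du : H k -> H c -> k u = u -> c u = u -> 0 < du ->
  (forall y, u < y <= u + du -> k y <> y) ->
  exists p d, u <= p /\ orbital k p d /\ c d = d.
Proof.
  intros Hk Hc Fku Fcu Hdu Hmv.
  set (G := fun g => H g /\ forall y, k y = y /\ c y = y -> g y = y).
  assert (HG : is_subgroup G) by apply (pointwise_stabilizer_subgroup H _ H_subgroup).
  assert (Gk : G k) by (split; [auto | intros y [? ?]; auto]).
  assert (Gc : G c) by (split; [auto | intros y [? ?]; auto]).
  destruct (group_orbital_at_left G k u (u + du)) as [d [Hd HGo]]; auto; try lra.
  { intros g [Hg _]. apply H_PLo, Hg. }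
  { intros g [_ Fg]. apply Fg; auto. }
  destruct (orbital_at_left k u (u + du) (H_PLo k Hk) Fku ltac:(lra) Hmv) as [e [He Hoe]].
  assert (Hed : e <= d).
  { apply Rnot_lt_le; intro. apply (proj1 (proj2 Hoe) d); [lra|].
    apply (proj2 (proj2 HGo) k Gk). }
  destruct (H_balanced G HG (fun g Hg => proj1 Hg) u d HGo k Gk) as [Hlr _].
  destruct (Hlr (ex_intro _ e (conj Hoe Hed))) as [p [Hup Hop]].
  exists p, d. split; [auto|split; [auto | apply (proj2 (proj2 HGo) c Gc)]].
Qed.

Lemma trivial_slope_support k : H k -> log_rslope k a = 0 ->
  exists d1 d2, 0 < d1 /\ 0 < d2 /\ forall y, k y <> y -> a + d1 < y < b - d2.
Proof.
  intros Hk Lk. pose proof a_lt_b.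
  pose proof Lk as Rk. apply log_rslope_eq0_iff in Rk; auto.
  unfold log_rslope, log_lslope in *.
  rewrite (ln_eq0_iff _ (H_rderiv_pos k Hk)) in Lk.
  rewrite (ln_eq0_iff _ (H_lderiv_pos k Hk)) in Rk.
  destruct (H_rgerm k Hk ((b - a) / 3) ltac:(lra)) as [d1 [Hd1 [Hd1b E1]]].
  destruct (H_lgerm k Hk ((b - a) / 3) ltac:(lra)) as [d2 [Hd2 [Hd2b E2]]].
  exists d1, d2. split; [auto|split; [auto|]].
  intros y Hy. split; apply Rnot_le_lt; intro Hl; apply Hy.
  - destruct (Rle_or_lt y a); [apply (H_fix_outside k Hk); lra|].
    rewrite E1, Lk by lra. ring.
  - destruct (Rle_or_lt b y); [apply (H_fix_outside k Hk); lra|].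
    rewrite E2, Rk by lra. ring.
Qed.

(* Conjugation by an element of H that pushes the support of k towards a. *)
Lemma support_near_a k z : H k -> log_rslope k a = 0 -> k z <> z ->
  forall eta, 0 < eta -> exists k' lo, H k' /\ a < lo /\ (exists z', k' z' <> z') /\
    forall y, k' y <> y -> lo < y < a + eta.
Proof.
  intros Hk Lk Hz eta Heta. pose proof a_lt_b.
  destruct (trivial_slope_support k Hk Lk) as [d1 [d2 [Hd1 [Hd2 Hsupp]]]].
  pose proof (Hsupp z Hz).
  destruct (H_orbit_near_a (b - d2) ltac:(lra) eta Heta) as [t [Ht Htv]].
  pose proof (H_PLo t Ht) as Htplo.
  destruct (H_inv t Ht) as [ti [Hti Eti]].
  exists (fun x => t (k (ti x))), (t (a + d1)).
  split; [apply H_comp; [apply H_comp|]; auto|split; [|split]].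
  - rewrite <- (proj1 (H_fix_ends t Ht)) at 1. apply (PLo_lt t Htplo). lra.
  - exists (t z). rewrite (proj1 (Eti z)). intro E. apply Hz, (PLo_inj t Htplo), E.
  - intros y Hy.
    assert (Hky : k (ti y) <> ti y) by (intro E; apply Hy; rewrite E; apply Eti).
    apply Hsupp in Hky. rewrite <- (proj2 (Eti y)). split.
    + apply (PLo_lt t Htplo); lra.
    + apply Rlt_trans with (t (b - d2)); [apply (PLo_lt t Htplo); lra | lra].
Qed.

Lemma H_comm_of_trivial_kernel :
  (forall k, H k -> log_rslope k a = 0 -> forall z, k z = z) ->
  forall f g, H f -> H g -> forall x, f (g x) = g (f x).
Proof.
  intros Htriv f g Hf Hg x.
  destruct (H_inv f Hf) as [fi [Hfi Ef]], (H_inv g Hg) as [gi [Hgi Eg]].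
  destruct (log_slopes_inv f fi Hf Hfi (fun y => proj1 (Ef y))) as [Lfi _].
  destruct (log_slopes_inv g gi Hg Hgi (fun y => proj1 (Eg y))) as [Lgi _].
  pose proof (H_comp _ _ Hf Hg) as Hgf. pose proof (H_comp _ _ Hgf Hfi) as Hfgf.
  pose proof (H_comp _ _ Hfgf Hgi) as Hcommutator.
  assert (Hid : gi (fi (g (f x))) = x).
  { apply (Htriv _ Hcommutator).
    rewrite (log_rslope_comp _ _ Hfgf Hgi), (log_rslope_comp _ _ Hgf Hfi),
      (log_rslope_comp _ _ Hf Hg). lra. }
  assert (E : fi (g (f x)) = g x) by (rewrite <- Hid at 2; symmetry; apply Eg).
  rewrite <- E. apply Ef.
Qed.

Section SmallSlopes.

Hypothesis H_small : forall eps, 0 < eps -> exists h, H h /\ 0 < log_rslope h a < eps.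

Lemma small_rslope r : 1 < r -> exists h, H h /\ 1 < rderiv h a < r.
Proof.
  intros Hr.
  assert (Hlnr : 0 < ln r) by (rewrite <- ln_1; apply ln_increasing; lra).
  destruct (H_small (ln r) Hlnr) as [h [Hh Hln]].
  pose proof (H_rderiv_pos h Hh). unfold log_rslope in *.
  exists h. split; [auto|split; apply ln_lt_inv; rewrite ?ln_1; lra].
Qed.

Lemma expanding_elt : exists f l D, H f /\ 1 < l /\ 0 < D /\ D <= (b - a) / 2 /\
  forall y, a <= y <= a + D -> f y = a + l * (y - a).
Proof.
  pose proof a_lt_b.
  destruct (small_rslope 2 ltac:(lra)) as [f [Hf Hl]].
  destruct (H_rgerm f Hf ((b - a) / 2) ltac:(lra)) as [D [HD [HDb Ef]]].
  exists f, (rderiv f a), D. repeat split; auto; lra.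
Qed.

Section Expanding.

Variables (f : R -> R) (l D : R).
Hypotheses (Hf : H f) (Hl : 1 < l) (HD : 0 < D)
  (Ef : forall y, a <= y <= a + D -> f y = a + l * (y - a)).

(* Conjugating by a high power of f spreads the linear germ of h at a over [a, a + D/2]. *)
Lemma small_linear_elt r : 1 < r -> exists g mu, H g /\ 1 < mu < r /\
  forall y, a <= y <= a + D / 2 -> g y = a + mu * (y - a).
Proof.
  intros Hr.
  pose proof (Rmin_l r 2); pose proof (Rmin_r r 2).
  destruct (small_rslope (Rmin r 2) ltac:(apply Rmin_glb_lt; lra)) as [h [Hh Hmu]].
  destruct (H_rgerm h Hh 1 Rlt_0_1) as [dh [Hdh [_ Eh]]].
  set (mu := rderiv h a) in *.
  destruct (H_inv f Hf) as [fi [Hfi Efi]].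
  assert (Efi' : forall y, a <= y <= a + D -> fi y = a + / l * (y - a)).
  { intros y Hy. rewrite (affine_inverse f fi a l D (fun x => proj1 (Efi x))) by (auto; nra).
    field; lra. }
  destruct (pow_unbounded l (D / dh) Hl) as [M HM].
  assert (HlM : 0 < l ^ M) by (apply pow_lt; lra).
  assert (Hfi_iter : forall y, a <= y <= a + D -> Nat.iter M fi y = a + (/ l) ^ M * (y - a)).
  { apply iter_affine; [|exact Efi'].
    intros z Hz. rewrite Efi' by auto.
    assert (0 <= / l * (z - a) <= z - a); [|lra].
    split; [apply Rmult_le_pos; [left; apply Rinv_0_lt_compat|]; lra|].
    rewrite <- (Rmult_1_l (z - a)) at 2. apply Rmult_le_compat_r; [lra|].
    rewrite <- Rinv_1. apply Rinv_le_contravar; lra. }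
  exists (fun x => Nat.iter M f (h (Nat.iter M fi x))), mu.
  split; [apply H_comp; [apply H_comp; [apply H_iter|]|apply H_iter]; auto|split; [lra|]].
  intros y Hy. rewrite Hfi_iter by lra. rewrite pow_inv.
  assert (Hsmall : / l ^ M * (y - a) <= dh).
  { apply (Rmult_le_reg_l (l ^ M)); auto.
    replace (l ^ M * (/ l ^ M * (y - a))) with (y - a) by (field; lra).
    apply (Rmult_lt_compat_r dh) in HM; [|lra].
    replace (D / dh * dh) with D in HM by (field; lra). nra. }
  assert (0 <= / l ^ M * (y - a)) by (apply Rmult_le_pos; [left; apply Rinv_0_lt_compat|]; lra).
  rewrite Eh by lra.
  rewrite (iter_expand f a l D (Rlt_le _ _ Hl) Ef M); [|nra|].
  - field. lra.
  - replace (l ^ M * (a + mu * (a + / l ^ M * (y - a) - a) - a)) with (mu * (y - a))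
      by (field; lra).
    assert (mu < 2) by lra. nra.
Qed.

(* Conjugate k to k' with support in (lo, a + D/4), and let g be linear of slope mu on [a, a + D/2]
   with mu below the ratio bound of k'.  Balance gives an orbital (p, d) of k' whose end d is
   fixed by g k' g^-1; but g^-1 d lies in (p, d), where k' moves it. *)
Lemma no_small_slopes_nontrivial_kernel k z : H k -> log_rslope k a = 0 -> k z <> z -> False.
Proof.
  intros Hk Lk Hz.
  destruct (support_near_a k z Hk Lk Hz (D / 4) ltac:(lra))
    as [k' [lo [Hk' [Hlo [[z' Hz'] Hsupp]]]]].
  pose proof (H_PLo k' Hk') as Hk'plo.
  destruct (PLo_support_start k' lo Hk'plo (ex_intro _ z' Hz') (fun y Hy => proj1 (Hsupp y Hy)))
    as [u [du [Hlou [Hdu [Fu [Hu Hmv]]]]]].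
  assert (HuD : u < a + D / 4) by (pose proof (Hu z' Hz'); pose proof (Hsupp z' Hz'); lra).
  destruct (orbital_ratio_bound k' a Hk'plo) as [r [Hr Hrat]].
  destruct (small_linear_elt r Hr) as [g [mu [Hg [Hmu Eg]]]].
  destruct (H_inv g Hg) as [gi [Hgi Egi]].
  assert (Egi' : forall w, a <= w <= a + D / 2 -> gi w = a + (w - a) / mu).
  { intros w Hw. apply (affine_inverse g gi a mu (D / 2) (fun x => proj1 (Egi x))); auto; nra. }
  set (c := fun x => g (k' (gi x))).
  assert (Hc : H c) by (unfold c; apply H_comp; [apply H_comp|]; auto).
  assert (Hgiu : a + (u - a) / mu < u).
  { assert ((u - a) / mu < u - a); [|lra].
    apply (Rmult_lt_reg_r mu); [lra|]. replace ((u - a) / mu * mu) with (u - a) by (field; lra).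
    nra. }
  assert (Fcu : c u = u).
  { unfold c. rewrite Egi' by lra.
    assert (Hfix : k' (a + (u - a) / mu) = a + (u - a) / mu).
    { apply NNPP; intro Hn. pose proof (Hu _ Hn). lra. }
    rewrite Hfix, <- Egi' by lra. apply Egi. }
  destruct (stabilizer_orbital_end k' c u du Hk' Hc Fu Fcu Hdu Hmv)
    as [p [d [Hup [[Hpd [Hmpd [Fp Fd]]] Fcd]]]].
  pose proof (Hsupp ((p + d) / 2) (Hmpd ((p + d) / 2) ltac:(lra))).
  apply (linear_conjugate_moves_orbital_end k' g a p d r mu (H_PLo g Hg)
    (conj Hpd (conj Hmpd (conj Fp Fd)))); [lra | apply Hrat; [lra | repeat split; auto] | lra | |].
  - assert (0 <= (d - a) / mu <= d - a).
    { split; [apply Rdiv_le_0_compat; lra|].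
      apply (Rmult_le_reg_r mu); [lra|]. replace ((d - a) / mu * mu) with (d - a) by (field; lra).
      nra. }
    rewrite Eg by lra. field. lra.
  - unfold c in Fcd. rewrite Egi' in Fcd by lra. exact Fcd.
Qed.

Hypothesis HDb : D <= (b - a) / 2.
Hypothesis H_comm : forall g h, H g -> H h -> forall x, g (h x) = h (g x).

(* Every element of H commutes with f, so the right end of the orbital of f at a is a common
   fixed point of H; hence it is b. *)
Lemma expanding_moves_right y : a < y < b -> y < f y.
Proof.
  intros Hy. pose proof a_lt_b. destruct (H_fix_ends f Hf) as [Fa Fb].
  assert (Hmv0 : forall z, a < z <= a + D -> z < f z) by (intros z Hz; rewrite Ef; nra).
  destruct (orbital_at_left f a (a + D) (H_PLo f Hf) Fa ltac:(lra)
    (fun z Hz E => Rlt_not_eq _ _ (Hmv0 z Hz) (eq_sym E))) as [e [He [_ [Hme [_ Fe]]]]].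
  assert (Hbe : e <= b) by (apply Rnot_lt_le; intro; apply (Hme b); [lra | auto]).
  assert (Hnot_below : forall s, H s -> ~ s e < e).
  { intros s Hs Hse. assert (a < s e).
    { rewrite <- (proj1 (H_fix_ends s Hs)). apply (PLo_lt s (H_PLo s Hs)). lra. }
    apply (Hme (s e)); [lra|]. rewrite H_comm, Fe; auto. }
  assert (Heb : e = b).
  { destruct Hbe as [Hlt|]; auto. exfalso.
    destruct (H_moves_inside e ltac:(lra)) as [s [Hs Hse]]. apply Hse.
    destruct (H_inv s Hs) as [s' [Hs' Es]].
    pose proof (PLo_le s (H_PLo s Hs) e (s' e) (Rnot_lt_le _ _ (Hnot_below s' Hs'))).
    rewrite (proj2 (Es e)) in *. pose proof (Rnot_lt_le _ _ (Hnot_below s Hs)). lra. }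
  subst e. apply Rnot_le_lt; intro Hle.
  destruct (Rle_or_lt y (a + D)) as [|Hyx]; [pose proof (Hmv0 y); lra|].
  destruct Hle as [Hlt|E]; [|apply (Hme y); auto].
  destruct (IVT (fun z => z - f z) (a + D) y) as [z [Hz Ez]];
    [| lra | pose proof (Hmv0 (a + D)); lra | lra |].
  - apply continuity_minus; [apply derivable_continuous, derivable_id|].
    apply PLo_continuity, H_PLo, Hf.
  - apply (Hme z); lra.
Qed.

Lemma iterate_near_b ys E : a < ys < b -> 0 < E -> exists N, b - E < Nat.iter N f ys < b.
Proof.
  intros Hys HE.
  assert (Hinv : forall n, a < Nat.iter n f ys < b).
  { intros n. apply Nat.iter_invariant; auto. intros z Hz. pose proof (expanding_moves_right z Hz).
    split; [lra|]. rewrite <- (proj2 (H_fix_ends f Hf)). apply (PLo_lt f (H_PLo f Hf)). lra. }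
  destruct (iter_escapes f ys (b - E) (H_PLo f Hf)) as [N HN].
  { intros z Hz. apply expanding_moves_right. pose proof (Hinv O). simpl in *. lra. }
  exists N. split; [auto | apply Hinv].
Qed.

Lemma expanding_contracts_at_b : exists E lb, 0 < E /\ 0 < lb < 1 /\
  forall j z, b - E <= z <= b -> Nat.iter j f z = b + lb ^ j * (z - b).
Proof.
  pose proof a_lt_b.
  destruct (H_lgerm f Hf ((b - a) / 2) ltac:(lra)) as [E [HE [HEb Efb]]].
  assert (Hlb : 0 < lderiv f b < 1).
  { split; [apply H_lderiv_pos, Hf|].
    pose proof (expanding_moves_right (b - E) ltac:(lra)). rewrite Efb in * by lra. nra. }
  exists E, (lderiv f b). split; [auto|split; [auto|]].
  intros j. apply iter_affine; intros z Hz; rewrite Efb by auto; [nra | ring].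
Qed.

(* A power Phi of f carries a window [ys, ys + dl] near a close to b.  On the window g is linear
   with fixed point a, near b (after a further power of f) linear with fixed point b, and since g
   commutes with f, Phi conjugates the one germ to the other. *)
Lemma no_small_slopes_abelian : False.
Proof.
  pose proof a_lt_b.
  destruct expanding_contracts_at_b as [E [lb [HE [Hlb Hfj]]]].
  set (ys := a + D / 4).
  destruct (iterate_near_b ys E ltac:(unfold ys; lra) HE) as [N0 HN0].
  set (Phi := Nat.iter N0 f) in *.
  assert (HPhi : PLo Phi) by (apply H_PLo, H_iter, Hf).
  destruct (PLo_rgerm Phi HPhi ys (D / 4) ltac:(lra)) as [dl [Hdl [HdlD [HmP EP]]]].
  assert (HPb : forall y, ys <= y <= ys + dl -> b - E <= Phi y < b).
  { intros y Hy. split.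
    - apply Rle_trans with (Phi ys); [lra | apply (PLo_le Phi HPhi); lra].
    - rewrite <- (proj2 (H_fix_ends Phi (H_iter _ _ Hf))). apply (PLo_lt Phi HPhi).
      unfold ys in *; lra. }
  set (rho := (ys - a + dl) / (ys - a + dl / 2)).
  assert (Erho : rho * (ys - a + dl / 2) = ys - a + dl) by (unfold rho; field; unfold ys; lra).
  assert (Hrho : 1 < rho) by (apply (Rmult_lt_reg_r (ys - a + dl / 2)); unfold ys in *; lra).
  destruct (small_linear_elt rho Hrho) as [g [mu [Hg [Hmu Eg]]]].
  destruct (H_lgerm g Hg 1 Rlt_0_1) as [dgb [Hdgb [_ Egb]]].
  destruct (pow_vanishes lb (dgb / E) ltac:(lra) ltac:(apply Rdiv_lt_0_compat; lra)) as [j Hj].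
  assert (HjE : lb ^ j * E < dgb).
  { apply (Rmult_lt_compat_r E) in Hj; [|lra].
    replace (dgb / E * E) with dgb in Hj by (field; lra). lra. }
  assert (Hlbj : 0 < lb ^ j) by (apply pow_lt; lra).
  apply (affine_germs_not_conjugate Phi a b ys dl (rderiv Phi ys) mu (lderiv g b)); auto;
    [unfold ys; lra | apply HN0 | lra | rewrite <- Erho; apply Rmult_le_compat_r; unfold ys; lra |].
  intros y Hy Hgy.
  pose proof (HPb y ltac:(lra)). pose proof (HPb _ Hgy).
  pose proof (Nat.iter_swap_gen _ _ g f f (fun z => H_comm g f Hg Hf z) (j + N0) y) as Ecomm.
  rewrite !Nat.iter_add in Ecomm. fold Phi in Ecomm.
  rewrite (Eg y), (Hfj j (Phi (a + mu * (y - a)))), (Hfj j (Phi y)) in Ecomm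
    by (unfold ys in *; lra).
  rewrite Egb in Ecomm.
  2:{ split; [|nra]. assert (lb ^ j * (b - Phi y) <= lb ^ j * E) by (apply Rmult_le_compat_l; lra).
      lra. }
  apply (Rmult_eq_reg_l (lb ^ j)); lra.
Qed.

End Expanding.

Lemma no_small_log_rslope : False.
Proof.
  destruct expanding_elt as [f [l [D [Hf [Hl [HD [HDb Ef]]]]]]].
  destruct (classic (exists k z, H k /\ log_rslope k a = 0 /\ k z <> z))
    as [[k [z [Hk [Lk Hz]]]]|Hno].
  - exact (no_small_slopes_nontrivial_kernel f l D Hf Hl HD Ef k z Hk Lk Hz).
  - apply (no_small_slopes_abelian f l D Hf Hl HD Ef HDb).
    apply H_comm_of_trivial_kernel. intros k Hk Lk z.
    apply NNPP; intro Hz. apply Hno. exists k, z. auto.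
Qed.

End SmallSlopes.

Lemma log_rslope_discrete : exists eps, 0 < eps /\ forall h, H h -> ~ 0 < log_rslope h a < eps.
Proof.
  apply NNPP; intro Hn. apply no_small_log_rslope. intros eps Heps.
  apply NNPP; intro Hn'. apply Hn. exists eps. split; [auto|]. intros h Hh Hlt. apply Hn'; eauto.
Qed.

(** * The image of phi *)

Lemma H_int_mult h : H h -> forall k : Z, exists g, H g /\
  log_rslope g a = IZR k * log_rslope h a /\ log_lslope g b = IZR k * log_lslope h b.
Proof.
  intros Hh. destruct (H_inv h Hh) as [h' [Hh' Eh]].
  destruct (log_slopes_inv h h' Hh Hh' (fun x => proj1 (Eh x))) as [L' R'].
  induction k as [|k [g [Hg [Lg Rg]]]|k [g [Hg [Lg Rg]]]] using Z.peano_ind.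
  - exists (fun x => x). rewrite log_rslope_id, log_lslope_id. split; [apply H_id | split; ring].
  - exists (fun x => h (g x)). rewrite log_rslope_comp, log_lslope_comp, succ_IZR by auto.
    split; [apply H_comp; auto | split; lra].
  - exists (fun x => h' (g x)).
    rewrite log_rslope_comp, log_lslope_comp, <- Z.sub_1_r, minus_IZR by auto.
    split; [apply H_comp; auto | split; lra].
Qed.

Lemma log_rslope_determines_lslope g h : H g -> H h ->
  log_rslope g a = log_rslope h a -> log_lslope g b = log_lslope h b.
Proof.
  intros Hg Hh E.
  destruct (H_inv h Hh) as [h' [Hh' Eh]].
  destruct (log_slopes_inv h h' Hh Hh' (fun x => proj1 (Eh x))) as [L' R'].
  pose proof (H_comp g h' Hg Hh') as Hk.
  assert (Lk : log_rslope (fun x => h' (g x)) a = 0) by (rewrite log_rslope_comp; auto; lra).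
  apply log_rslope_eq0_iff in Lk; auto.
  rewrite log_lslope_comp in Lk; auto. lra.
Qed.

Lemma log_rslope_image_sub x y :
  (exists h, H h /\ log_rslope h a = x) -> (exists h, H h /\ log_rslope h a = y) ->
  exists h, H h /\ log_rslope h a = x - y.
Proof.
  intros [g [Hg <-]] [h [Hh <-]].
  destruct (H_inv h Hh) as [h' [Hh' Eh]].
  destruct (log_slopes_inv h h' Hh Hh' (fun z => proj1 (Eh z))) as [Lh' _].
  exists (fun z => h' (g z)). split; [apply H_comp; auto|].
  rewrite log_rslope_comp by auto. lra.
Qed.

Lemma phi_hom g h : H g -> H h -> phi a b (gmul g h) = padd (phi a b g) (phi a b h).
Proof.
  intros Hg Hh. rewrite !phi_eq. unfold gmul, padd. simpl.
  rewrite log_rslope_comp, log_lslope_comp by auto. reflexivity.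
Qed.

Lemma phi_trivial : (forall h, H h -> log_rslope h a = 0) -> forall h, H h -> phi a b h = (0, 0).
Proof.
  intros Hall h Hh. rewrite phi_eq, (Hall h Hh).
  rewrite (proj1 (log_rslope_eq0_iff h Hh) (Hall h Hh)). reflexivity.
Qed.

Lemma phi_image_cyclic : (exists h, H h /\ log_rslope h a <> 0) ->
  exists psi : Z -> R * R,
    (forall m n, psi (m + n)%Z = padd (psi m) (psi n)) /\
    (forall m n, psi m = psi n -> m = n) /\
    (forall v, (exists h, H h /\ phi a b h = v) <-> exists k, psi k = v).
Proof.
  intros [h1 [Hh1 Lh1]].
  destruct log_rslope_discrete as [eps [Heps Hgap]].
  destruct (discrete_subgroup_cyclic (fun x => exists h, H h /\ log_rslope h a = x) eps
    log_rslope_image_sub Heps) as [m [Hm [[h0 [Hh0 Lh0]] Hcyc]]].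
  { intros x [h [Hh <-]]. apply Hgap, Hh. }
  { exists (log_rslope h1 a). split; eauto. }
  exists (fun k => (IZR k * m, IZR k * log_lslope h0 b)).
  split; [|split].
  - intros k1 k2. unfold padd. simpl. rewrite plus_IZR. f_equal; ring.
  - intros k1 k2 E. injection E as E _. apply eq_IZR, (Rmult_eq_reg_r m); lra.
  - intros v. split.
    + intros [h [Hh <-]].
      destruct (Hcyc _ (ex_intro _ h (conj Hh eq_refl))) as [k Ek].
      destruct (H_int_mult h0 Hh0 k) as [g [Hg [Lg Rg]]].
      rewrite Lh0 in Lg. exists k. rewrite phi_eq, Ek, <- Rg, <- Lg.
      rewrite (log_rslope_determines_lslope g h Hg Hh); [reflexivity | lra].
    + intros [k <-]. destruct (H_int_mult h0 Hh0 k) as [g [Hg [Lg Rg]]].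
      exists g. rewrite phi_eq, Lg, Rg, Lh0. split; auto.
Qed.

End SingleOrbital.

Theorem lemma9 (H : (R -> R) -> Prop) (a b : R) :
  PL_subgroup H -> balanced H ->
  (forall c d, group_orbital H c d <-> (c = a /\ d = b)) ->
  (* phi is a homomorphism H -> R x R *)
  (forall g h, H g -> H h -> phi a b (gmul g h) = padd (phi a b g) (phi a b h)) /\
  (* its image is trivial or isomorphic to Z *)
  ((forall h, H h -> phi a b h = (0, 0)) \/
   exists psi : Z -> R * R,
     (forall m n, psi (m + n)%Z = padd (psi m) (psi n)) /\
     (forall m n, psi m = psi n -> m = n) /\
     (forall v, (exists h, H h /\ phi a b h = v) <-> exists k, psi k = v)).
Proof.
  intros HPL Hbal Horb. split.
  - exact (phi_hom H a b HPL Horb).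
  - destruct (classic (forall h, H h -> log_rslope h a = 0)) as [Hall|Hex].
    + left. exact (phi_trivial H a b HPL Horb Hbal Hall).
    + right. apply (phi_image_cyclic H a b HPL Horb Hbal).
      apply not_all_ex_not in Hex as [h Hh]. exists h. apply imply_to_and, Hh.
Qed.
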